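(* Let $k>1$. The minimal elements, among the subquasivarieties of $\mathcal{Q}(\mathbf{ŁV}_{k+1})$ that strictly contain the class of Boolean algebras $\mathcal{Q}(\mathbf{ŁV}_2)$, are exactly the quasivarieties $\mathcal{Q}(\mathbf{ŁV}_{q+1}\times\mathbf{ŁV}_2)$ with $q>1$ a prime dividing $k$.
   Context: $\mathbf{ŁV}_{n+1}$ is the MV-algebra (Łukasiewicz chain) on $\{0,\frac1n,\dots,1\}$ with $\neg x=1-x$, $x\oplus y=\min\{1,x+y\}$; $\mathbf{ŁV}_2$ is the two-element Boolean algebra. $\mathcal{Q}(K)$ denotes the quasivariety generated by $K$. *)

From mathcomp Require Import all_boot.
From Stdlib Require List.
Set Implicit Arguments. Unset Strict Implicit. Unset Printing Implicit Defensive.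

Record mvAlg := MvAlg {
  carrier :> Type;
  mv_zero : carrier;
  mv_neg : carrier -> carrier;
  mv_oplus : carrier -> carrier -> carrier }.

Inductive term :=
| TVar of nat
| TZero
| TNeg of term
| TOplus of term & term.

Fixpoint eval (A : mvAlg) (v : nat -> A) (t : term) : A :=
  match t with
  | TVar i => v i
  | TZero => @mv_zero A
  | TNeg s => @mv_neg A (eval v s)
  | TOplus s u => @mv_oplus A (eval v s) (eval v u)
  end.

(* A quasi-identity  (s1 = t1 & ... & sn = tn) => s = t. *)
Definition quasi_identity := (list (term * term) * (term * term))%type.

Definition sat (A : mvAlg) (q : quasi_identity) : Prop :=
  forall v : nat -> A,
    (forall e, List.In e q.1 -> eval v e.1 = eval v e.2) ->
    eval v q.2.1 = eval v q.2.2.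

Definition mvClass := mvAlg -> Prop.

Definition subclass (K L : mvClass) : Prop := forall A, K A -> L A.
Definition sameclass (K L : mvClass) : Prop := subclass K L /\ subclass L K.
Definition strict_subclass (K L : mvClass) : Prop :=
  subclass K L /\ ~ subclass L K.

Definition is_quasivariety (Q : mvClass) : Prop :=
  exists Sigma : quasi_identity -> Prop,
    forall A, Q A <-> (forall q, Sigma q -> sat A q).

(* The quasivariety generated by K: models of all quasi-identities valid in K
   (equal to ISPPu(K) by Mal'cev's theorem). *)
Definition Qgen (K : mvClass) : mvClass :=
  fun A => forall q, (forall B, K B -> sat B q) -> sat A q.

Definition single (A : mvAlg) : mvClass := fun B => B = A.

(* ŁV_{n+1}: the chain {0, 1/n, ..., 1}, element i/n encoded as i : 'I_n.+1,
   with ¬x = 1 - x and x ⊕ y = min(1, x+y). *)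
Definition LV (n : nat) : mvAlg :=
  @MvAlg 'I_n.+1 ord0
    (fun x => inord (n - x))
    (fun x y => inord (minn n (x + y))).

Definition prodA (A B : mvAlg) : mvAlg :=
  @MvAlg (A * B)%type (@mv_zero A, @mv_zero B)
    (fun x => (@mv_neg A x.1, @mv_neg B x.2))
    (fun x y => (@mv_oplus A x.1 y.1, @mv_oplus B x.2 y.2)).

(* Let [Q] lie strictly between the Boolean algebras and Q(LV k), and let [A] in [Q] refute a
   quasi-identity [phi] valid in [LV 1] at a valuation [v].  In [LV k] a valuation whose
   variables are all Boolean satisfies [phi]; any other value [x] has a multiple [r x] mod [k]
   equal to [k/p] for some prime [p | k], and a term [tcheck k p], built from modular
   multiplication and an equality test, detects this while taking only the values [0] and [k/p].
   So [phi] together with the equations [tcheck k p = 0] holds in [LV k], hence in [A], and some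
   [c := tcheck k p] is nonzero in [A] at [v].  In [LV k] the values of [tcheck k p] are images
   of the generator [(1/p, 0)] of [LV p x LV 1] under homomorphisms, so the one-variable
   relations of that generator hold for [c], while distinct first coordinates stay distinct as
   [c <> 0]; this embeds [LV p x LV 1] into [A x LV 1].  Thus every such [Q] contains some
   Q(LV p x LV 1), and for [Q] = Q(LV p x LV 1) the same argument gives minimality. *)

From mathcomp Require Import all_boot zify.
From Stdlib Require Import Classical.
Set Implicit Arguments. Unset Strict Implicit. Unset Printing Implicit Defensive.

Local Notation QV A := (Qgen (single A)).

Definition is_hom (A B : mvAlg) (f : A -> B) :=
  [/\ f (@mv_zero A) = @mv_zero B,
      forall x, f (@mv_neg A x) = @mv_neg B (f x) &
      forall x y, f (@mv_oplus A x y) = @mv_oplus B (f x) (f y)].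

Lemma eval_hom (A B : mvAlg) (f : A -> B) (v : nat -> A) t :
  is_hom f -> eval (fun i => f (v i)) t = f (eval v t).
Proof. by case=> f0 fN fD; elim: t => //= [s -> | s -> u ->]. Qed.

Lemma hom_id (A : mvAlg) : is_hom (fun x : A => x).
Proof. by []. Qed.

Lemma hom_comp (A B C : mvAlg) (f : A -> B) (g : B -> C) :
  is_hom f -> is_hom g -> is_hom (fun x => g (f x)).
Proof. by case=> f0 fN fD [g0 gN gD]; split=> *; rewrite ?f0 ?fN ?fD. Qed.

Lemma hom_fst (A B : mvAlg) : is_hom (fun x : prodA A B => x.1).
Proof. by []. Qed.

Lemma hom_snd (A B : mvAlg) : is_hom (fun x : prodA A B => x.2).
Proof. by []. Qed.

Lemma hom_pair (A B C : mvAlg) (f : A -> B) (g : A -> C) :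
  is_hom f -> is_hom g -> is_hom (fun x => (f x, g x) : prodA B C).
Proof. by case=> f0 fN fD [g0 gN gD]; split=> * /=; rewrite ?f0 ?g0 ?fN ?gN ?fD ?gD. Qed.

Lemma eval_prodA (A B : mvAlg) (v : nat -> prodA A B) t :
  eval v t = (eval (fun i => (v i).1) t, eval (fun i => (v i).2) t).
Proof. by rewrite (eval_hom _ _ (@hom_fst A B)) (eval_hom _ _ (@hom_snd A B)); case: (eval v t). Qed.

Lemma In_mem (T : eqType) (x : T) (s : seq T) : List.In x s <-> x \in s.
Proof.
elim: s => //= y s IH; rewrite in_cons.
by split=> [[-> | /IH ->] | /orP [/eqP -> | /IH]]; rewrite ?eqxx ?orbT; auto.
Qed.

Definition holds (A : mvAlg) (v : nat -> A) (q : quasi_identity) : Prop :=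
  (forall e, List.In e q.1 -> eval v e.1 = eval v e.2) -> eval v q.2.1 = eval v q.2.2.

Lemma holds_embed (A B : mvAlg) (f : A -> B) (v : nat -> A) q :
  is_hom f -> injective f -> holds (fun i => f (v i)) q <-> holds v q.
Proof.
move=> hf f_inj; rewrite /holds; split=> hq hprem; move: hq.
- rewrite !(eval_hom _ _ hf) => hq; apply/f_inj/hq => e /hprem.
  by rewrite !(eval_hom _ _ hf) => ->.
- move=> hq; rewrite !(eval_hom _ _ hf) hq // => e /hprem.
  by rewrite !(eval_hom _ _ hf) => /f_inj.
Qed.

Lemma sat_embed (A B : mvAlg) (f : A -> B) q :
  is_hom f -> injective f -> sat B q -> sat A q.
Proof. by move=> hf f_inj hB v; apply/(holds_embed v q hf f_inj)/hB. Qed.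

Lemma sat_prodA (A B : mvAlg) q : sat A q -> sat B q -> sat (prodA A B) q.
Proof.
move=> hA hB v hprem; rewrite !eval_prodA; congr pair; [apply: hA | apply: hB] => e /hprem;
  by rewrite !eval_prodA => -[].
Qed.

Lemma Qgen_quasivariety K : is_quasivariety (Qgen K).
Proof. by exists (fun q => forall B, K B -> sat B q). Qed.

Lemma Qgen_self A : QV A A.
Proof. by move=> q; apply. Qed.

Lemma sat_of_Qgen (A B : mvAlg) q : QV B A -> sat B q -> sat A q.
Proof. by move=> h hB; apply: h => _ ->. Qed.

Lemma Qgen_min (Q : mvClass) A : is_quasivariety Q -> Q A -> subclass (QV A) Q.
Proof.
case=> S hS QA B hB; apply/hS => q Sq; apply: hB => _ ->.
by move/hS: QA; apply.
Qed.

Lemma quasivariety_prodA (Q : mvClass) (A B : mvAlg) :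
  is_quasivariety Q -> Q A -> Q B -> Q (prodA A B).
Proof.
case=> S hS /hS QA /hS QB; apply/hS => q Sq.
by apply: sat_prodA; [apply: QA | apply: QB].
Qed.

Lemma quasivariety_embed (Q : mvClass) (A B : mvAlg) (f : A -> B) :
  is_quasivariety Q -> Q B -> is_hom f -> injective f -> Q A.
Proof. by case=> S hS /hS QB hf f_inj; apply/hS => q /QB; apply: sat_embed hf f_inj. Qed.

Lemma quasivariety_sameclass (Q Q0 : mvClass) :
  is_quasivariety Q0 -> sameclass Q Q0 -> is_quasivariety Q.
Proof. by case=> S hS [QQ0 Q0Q]; exists S => A; rewrite -hS; split=> [/QQ0|/Q0Q]. Qed.

Fixpoint tsubst (s : nat -> term) (t : term) : term :=
  match t with
  | TVar i => s i
  | TZero => TZero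
  | TNeg u => TNeg (tsubst s u)
  | TOplus u w => TOplus (tsubst s u) (tsubst s w)
  end.

Lemma eval_subst (A : mvAlg) (v : nat -> A) s t :
  eval v (tsubst s t) = eval (fun i => eval v (s i)) t.
Proof. by elim: t => //= [u -> | u -> w ->]. Qed.

Fixpoint tvars (t : term) : nat :=
  match t with
  | TVar i => i.+1
  | TZero => 0
  | TNeg s => tvars s
  | TOplus s u => maxn (tvars s) (tvars u)
  end.

Definition qvars (q : quasi_identity) : nat :=
  foldr (fun e m => maxn (maxn (tvars e.1) (tvars e.2)) m)
        (maxn (tvars q.2.1) (tvars q.2.2)) q.1.

Lemma eval_ext (A : mvAlg) (v v' : nat -> A) t :
  (forall i, i < tvars t -> v i = v' i) -> eval v t = eval v' t.
Proof.
elim: t => //= [i | s IHs | s IHs u IHu] h; first exact: h.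
  by rewrite IHs.
by rewrite IHs ?IHu // => i hi; apply: h; lia.
Qed.

Lemma qvars_concl q : maxn (tvars q.2.1) (tvars q.2.2) <= qvars q.
Proof. by case: q => l c; elim: l => //= e l IH; rewrite leq_max IH orbT. Qed.

Lemma qvars_prem q e : List.In e q.1 -> maxn (tvars e.1) (tvars e.2) <= qvars q.
Proof.
case: q => l c /=; rewrite /qvars /=.
by elim: l => //= e' l IH [-> | /IH]; rewrite leq_max ?leqnn // => ->; rewrite orbT.
Qed.

Lemma holds_ext (A : mvAlg) (v v' : nat -> A) q :
  (forall i, i < qvars q -> v i = v' i) -> holds v q -> holds v' q.
Proof.
move=> h; have ext t : tvars t <= qvars q -> eval v t = eval v' t.
  by move=> ht; apply: eval_ext => i hi; apply: h; lia.
move=> hv hprem; have := qvars_concl q; rewrite geq_max => /andP [h1 h2].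
rewrite -!ext //; apply: hv => e he; have := qvars_prem he; rewrite geq_max => /andP [h3 h4].
by rewrite !ext // hprem.
Qed.

Lemma holds_at_image (A B : mvAlg) (f : B -> A) (w : nat -> A) (w' : nat -> B) q :
  is_hom f -> injective f -> sat B q ->
  (forall i, i < qvars q -> w i = f (w' i)) -> holds w q.
Proof.
move=> hf f_inj hB hw; apply: (@holds_ext _ (fun i => f (w' i))) => [i /hw -> //|].
exact/(holds_embed w' q hf f_inj)/hB.
Qed.

Lemma mul_mod_gcdn a n m : 0 < a -> gcdn a n %| m -> exists u, u * a = m %[mod n].
Proof.
move=> a0 /dvdnP [t ->]; case: (egcdnP n a0) => ka kn def_g _.
by exists (t * ka); rewrite -mulnA def_g mulnDr mulnA modnMDl.
Qed.

Definition hits n p a := has (fun r => r * a %% n == n %/ p) (iota 0 n).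

(* The multiples of [a] modulo [n] are those of [g := gcdn a n], and [n %/ p] is one of them
   for any prime [p] dividing [n %/ g > 1]. *)
Lemma exists_prime_hits a n : 0 < a < n -> exists2 p, prime p & p %| n /\ hits n p a.
Proof.
case/andP=> a0 an; have n0 : 0 < n by lia.
set g := gcdn a n.
have g0 : 0 < g by rewrite gcdn_gt0 a0.
have gn : g %| n := dvdn_gcdr a n.
have ga : g <= a by rewrite dvdn_leq // dvdn_gcdl.
have d1 : 1 < n %/ g by rewrite ltn_divRL //; lia.
set p := pdiv (n %/ g).
have pp : prime p := pdiv_prime d1.
have pd : p %| n %/ g := pdiv_dvd _.
have pn : p %| n by rewrite (dvdn_trans pd) // -{2}(divnK gn) dvdn_mulr.
exists p => //; split => //.
have [u hu] : exists u, u * a = n %/ p %[mod n].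
  apply: mul_mod_gcdn => //.
  by rewrite dvdn_divRL // mulnC -{2}(divnK gn) dvdn_pmul2r.
apply/hasP; exists (u %% n); first by rewrite mem_iota ltn_mod n0.
by rewrite modnMml hu modn_small // ltn_Pdiv // prime_gt1.
Qed.

Definition scale m n (x : LV m) : LV n := inord ((x : 'I_m.+1) * (n %/ m)).

Lemma LV_negE n (x : LV n) : nat_of_ord (mv_neg x : 'I_n.+1) = n - x.
Proof. by rewrite /= inordK // ltnS leq_subr. Qed.

Lemma LV_oplusE n (x y : LV n) : nat_of_ord (mv_oplus x y : 'I_n.+1) = minn n (x + y).
Proof. by rewrite /= inordK // ltnS geq_minl. Qed.

Section Scale.
Variables (m n : nat).
Hypotheses (m0 : 0 < m) (mn : m %| n).

Lemma scaleE (x : LV m) : nat_of_ord (scale n x : 'I_n.+1) = (x : 'I_m.+1) * (n %/ m).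
Proof.
case/dvdnP: mn => k ->; rewrite /scale mulnK // inordK // ltnS mulnC.
by rewrite leq_mul2l -ltnS ltn_ord orbT.
Qed.

Lemma scale_hom : is_hom (@scale m n).
Proof.
case/dvdnP: mn => k hk; have hd : n %/ m = k by rewrite hk mulnK.
split=> [|x|x y]; apply: ord_inj; rewrite scaleE // hd.
- by rewrite !LV_negE scaleE // hd hk mulnBl [k * m]mulnC.
- by rewrite !LV_oplusE !scaleE // hd hk -mulnDl minnMl [k * m]mulnC.
Qed.

Lemma scale_inj : 0 < n -> injective (@scale m n).
Proof.
move=> n0 x y /(congr1 (fun z : LV n => nat_of_ord (z : 'I_n.+1))).
have k0 : 0 < n %/ m by rewrite divn_gt0 // dvdn_leq.
by rewrite !scaleE => /eqP; rewrite eqn_pmul2r // => /eqP /ord_inj.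
Qed.
End Scale.

Fixpoint tmul (r : nat) (t : term) : term :=
  if r is r'.+1 then TOplus (tmul r' t) t else TZero.
Definition todot s t := TNeg (TOplus (TNeg s) (TNeg t)).
Definition tjoin s t := TOplus (todot s (TNeg t)) t.
Definition tmeet s t := TNeg (tjoin (TNeg s) (TNeg t)).
Definition tbigjoin (ts : seq term) := foldr tjoin TZero ts.

Definition tzero_test n t := TNeg (tmul n t).
Definition tdist s t := TOplus (todot s (TNeg t)) (todot t (TNeg s)).
Definition teq_test n s t := tzero_test n (tdist s t).
Definition taddmod n s t :=
  tjoin (todot s t) (tmeet (TNeg (tzero_test n (TNeg (TOplus s t)))) (TOplus s t)).
Fixpoint tmulmod n r t := if r is r'.+1 then taddmod n (tmulmod n r' t) t else TZero.
(* In [LV n], [t = n/p] iff [~ t = (p - 1) t]. *)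
Definition tsel n p t := tmeet (teq_test n (TNeg t) (tmul p.-1 t)) t.
Definition tdetect n p t := tbigjoin [seq tsel n p (tmulmod n r t) | r <- iota 0 n].
Definition tcheck n p N := tbigjoin [seq tdetect n p (TVar j) | j <- iota 0 N].

Definition evalN n (v : nat -> LV n) t : nat := eval v t.

Section Semantics.
Variables (n : nat) (v : nat -> LV n).
Local Notation ev := (evalN v).

Lemma ev_le t : ev t <= n.
Proof. by rewrite /evalN -ltnS. Qed.

Lemma ev_neg s : ev (TNeg s) = n - ev s.
Proof. exact: LV_negE. Qed.

Lemma ev_oplus s t : ev (TOplus s t) = minn n (ev s + ev t).
Proof. exact: LV_oplusE. Qed.

Lemma ev_mul r t : ev (tmul r t) = minn n (r * ev t).
Proof.
elim: r => [|r IH] /=; first by rewrite minn0.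
by rewrite ev_oplus IH; have := ev_le t; lia.
Qed.

Lemma ev_odot s t : ev (todot s t) = ev s + ev t - n.
Proof. rewrite /todot ev_neg ev_oplus !ev_neg; have := ev_le t; have := ev_le s; lia. Qed.

Lemma ev_join s t : ev (tjoin s t) = maxn (ev s) (ev t).
Proof. rewrite /tjoin ev_oplus ev_odot ev_neg; have := ev_le t; have := ev_le s; lia. Qed.

Lemma ev_meet s t : ev (tmeet s t) = minn (ev s) (ev t).
Proof. rewrite /tmeet ev_neg ev_join !ev_neg; have := ev_le t; have := ev_le s; lia. Qed.

Lemma ev_bigjoin_if (f : nat -> term) (P : pred nat) m s :
  (forall i, ev (f i) = if P i then m else 0) ->
  ev (tbigjoin [seq f i | i <- s]) = if has P s then m else 0.
Proof.
move=> hf; elim: s => //= i s IH; rewrite ev_join IH hf.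
by case: (P i); case: (has P s); rewrite ?maxnn ?maxn0 ?max0n.
Qed.

Lemma ev_zero_test t : ev (tzero_test n t) = if ev t == 0 then n else 0.
Proof. rewrite /tzero_test ev_neg ev_mul; have := ev_le t; case: eqP; nia. Qed.

Lemma ev_eq_test s t : ev (teq_test n s t) = if ev s == ev t then n else 0.
Proof.
rewrite /teq_test ev_zero_test /tdist ev_oplus !ev_odot !ev_neg.
have := ev_le t; have := ev_le s; do 2 case: eqP; lia.
Qed.

Lemma ev_addmod s t : ev (taddmod n s t) = if ev s + ev t < n then ev s + ev t else ev s + ev t - n.
Proof.
rewrite /taddmod ev_join ev_odot ev_meet ev_neg ev_zero_test ev_neg ev_oplus.
have := ev_le t; have := ev_le s; case: eqP; case: ltnP; lia.
Qed.

Lemma ev_mulmod r t : ev (tmulmod n r t) = r * ev t %% n.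
Proof.
elim: r => [|r IH] /=; first by rewrite mod0n.
rewrite ev_addmod IH mulSnr -modnDml.
case: (posnP n) => [n0 | n0].
  have : ev t = 0 by have := ev_le t; lia.
  by move=> ->; rewrite muln0 n0 !modn0.
have := ev_le t; have := ltn_mod (r * ev t) n; rewrite n0 /=.
set y := r * ev t %% n => hy hx; case: ltnP => hyx; first by rewrite modn_small.
by rewrite -{2}(subnK hyx) modnDr modn_small //; lia.
Qed.

Lemma ev_sel p t : 0 < p -> p %| n -> ev (tsel n p t) = if ev t == n %/ p then n %/ p else 0.
Proof.
move=> p0 /dvdnP [m hm]; have -> : n %/ p = m by rewrite hm mulnK.
rewrite /tsel ev_meet ev_eq_test ev_neg ev_mul.
have := ev_le t; case: eqP; case: eqP; nia.
Qed.

Lemma ev_detect p t : 0 < p -> p %| n ->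
  ev (tdetect n p t) = if hits n p (ev t) then n %/ p else 0.
Proof. by move=> p0 pn; apply: ev_bigjoin_if => r; rewrite ev_sel // ev_mulmod. Qed.

Lemma ev_check p N : 0 < p -> p %| n ->
  ev (tcheck n p N) = if has (fun j => hits n p (ev (TVar j))) (iota 0 N) then n %/ p else 0.
Proof. by move=> p0 pn; apply: ev_bigjoin_if => j; rewrite ev_detect. Qed.

Lemma boolean_of_checks N : (forall p, prime p -> p %| n -> ev (tcheck n p N) = 0) ->
  forall j, j < N -> ev (TVar j) = 0 \/ ev (TVar j) = n.
Proof.
move=> hcheck j jN; have := ev_le (TVar j); rewrite leq_eqVlt.
case/orP=> [/eqP | xn]; [by right | left; apply/eqP; apply: contraT; rewrite -lt0n => x0].
have [p pp [pn hit]] := exists_prime_hits (ltac:(lia) : 0 < ev (TVar j) < n).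
have := hcheck p pp pn; rewrite ev_check ?prime_gt0 //.
have -> : has (fun j => hits n p (ev (TVar j))) (iota 0 N) by apply/hasP; exists j; rewrite ?mem_iota.
have : 0 < n %/ p by rewrite divn_gt0 ?prime_gt0 // dvdn_leq //; lia.
by case: (n %/ p).
Qed.
End Semantics.

Lemma holds_of_boolean n q (w : nat -> LV n) : 0 < n -> sat (LV 1) q ->
  (forall j, j < qvars q -> evalN w (TVar j) = 0 \/ evalN w (TVar j) = n) -> holds w q.
Proof.
move=> n0 hq hw.
pose b j : LV 1 := if evalN w (TVar j) == n then ord_max else ord0.
apply: (holds_at_image (scale_hom _ (dvd1n n)) (scale_inj _ (dvd1n n) n0) hq (w' := b)) => // j /hw hj.
apply: ord_inj; rewrite scaleE // divn1 /b; move: hj; rewrite /evalN /=; case: eqP => /= [-> | ]; lia.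
Qed.

Definition gen p : prodA (LV p) (LV 1) := (inord 1, ord0).

(* Every element of [LV p x LV 1] is a term in [gen p]: [(a/p, 0) = a.g] and [(a/p, 1) = ~((p-a).g)]. *)
Definition gen_term p (x : prodA (LV p) (LV 1)) : term :=
  if nat_of_ord (x.2 : 'I_2) == 0 then tmul (x.1 : 'I_p.+1) (TVar 0)
  else TNeg (tmul (p - (x.1 : 'I_p.+1)) (TVar 0)).

Lemma eval_gen_term p x : 0 < p -> eval (fun _ => gen p) (gen_term x) = x.
Proof.
move=> p0; case: x => a b; rewrite eval_prodA.
have ha := ltn_ord (a : 'I_p.+1); have hb := ltn_ord (b : 'I_2).
have g1 : evalN (fun _ => (gen p).1) (TVar 0) = 1 by rewrite /evalN /= inordK.
have g2 : evalN (fun _ => (gen p).2) (TVar 0) = 0 by [].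
congr pair; apply: ord_inj; rewrite /gen_term /=; case: eqP => hb0;
  rewrite -/(evalN _ _) ?ev_neg ev_mul ?g1 ?g2; lia.
Qed.

Lemma hom_of_relations (B A : mvAlg) (g : B) (c : A) (tm : B -> term) :
  (forall x, eval (fun _ => g) (tm x) = x) ->
  (forall R S, eval (fun _ => g) R = eval (fun _ => g) S ->
               eval (fun _ => c) R = eval (fun _ => c) S) ->
  is_hom (fun x => eval (fun _ => c) (tm x)).
Proof.
move=> htm rel; split=> [|x|x y].
- by apply: (rel _ TZero); rewrite htm.
- by apply: (rel _ (TNeg (tm x))); rewrite /= !htm.
- by apply: (rel _ (TOplus (tm x) (tm y))); rewrite /= !htm.
Qed.

Section Transfer.
Variables (n p N : nat) (A : mvAlg) (v : nat -> A).
Hypotheses (n0 : 0 < n) (pp : prime p) (pn : p %| n) (An : QV (LV n) A).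
Let p0 : 0 < p := prime_gt0 pp.
Let c := eval v (tcheck n p N).

Lemma check_value (w : nat -> LV n) :
  eval w (tcheck n p N) = scale n (gen p).2 \/ eval w (tcheck n p N) = scale n (gen p).1.
Proof.
have := ev_check w N p0 pn; rewrite /evalN.
case: has => h; [right | left]; apply: ord_inj; rewrite h scaleE ?dvd1n //=.
by rewrite inordK // mul1n.
Qed.

Let tc := tsubst (fun _ => tcheck n p N).

Lemma check_eq_transfer R S :
  eval (fun _ => gen p) R = eval (fun _ => gen p) S -> eval (fun _ => c) R = eval (fun _ => c) S.
Proof.
move=> hRS.
have valid : sat (LV n) ([::], (tc R, tc S)).
  move=> w _; rewrite /= !eval_subst; case: (check_value w) => ->.
  - have hf := hom_comp (@hom_snd (LV p) (LV 1)) (scale_hom (ltn0Sn 0) (dvd1n n)).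
    by rewrite (eval_hom (fun _ => gen p) R hf) (eval_hom (fun _ => gen p) S hf) hRS.
  - have hf := hom_comp (@hom_fst (LV p) (LV 1)) (scale_hom p0 pn).
    by rewrite (eval_hom (fun _ => gen p) R hf) (eval_hom (fun _ => gen p) S hf) hRS.
by have := sat_of_Qgen An valid (v := v); rewrite /= !eval_subst; apply.
Qed.

Lemma check_neq_transfer R S : c <> mv_zero A ->
  (eval (fun _ => gen p) R).1 <> (eval (fun _ => gen p) S).1 -> eval (fun _ => c) R <> eval (fun _ => c) S.
Proof.
move=> c0 hRS.
have valid : sat (LV n) ([:: (tc R, tc S)], (tcheck n p N, TZero)).
  move=> w /(_ _ (or_introl erefl)); rewrite /= !eval_subst; case: (check_value w) => ->.
  - by move=> _; apply: ord_inj; rewrite scaleE.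
  - have hf := hom_comp (@hom_fst (LV p) (LV 1)) (scale_hom p0 pn).
    by rewrite (eval_hom (fun _ => gen p) R hf) (eval_hom (fun _ => gen p) S hf) => /(scale_inj p0 pn n0).
have := sat_of_Qgen An valid (v := v); rewrite /holds /= => h hRSc; apply/c0/h => _ [<- | []].
by rewrite /tc !eval_subst.
Qed.
End Transfer.

Lemma LVp_LV1_embeds n p N (A : mvAlg) (v : nat -> A) :
  0 < n -> prime p -> p %| n -> QV (LV n) A -> eval v (tcheck n p N) <> mv_zero A ->
  QV (prodA A (LV 1)) (prodA (LV p) (LV 1)).
Proof.
move=> n0 pp pn An c0; have p0 := prime_gt0 pp.
set c := eval v (tcheck n p N).
pose f (x : prodA (LV p) (LV 1)) : prodA A (LV 1) := (eval (fun _ => c) (gen_term x), x.2).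
apply: (@quasivariety_embed _ _ _ f (Qgen_quasivariety _) (@Qgen_self _)).
  apply: hom_pair (@hom_snd _ _); apply: (hom_of_relations (g := gen p)).
  - by move=> x; rewrite eval_gen_term.
  - exact: check_eq_transfer.
move=> x y [hxy h2]; apply: injective_projections h2; apply/eqP.
case: eqP => // /eqP ne; exfalso.
apply: (check_neq_transfer n0 pp pn An c0 _ hxy).
by rewrite !eval_gen_term //; apply/eqP.
Qed.

Lemma exists_nonzero_check n (A : mvAlg) : 0 < n -> QV (LV n) A -> ~ QV (LV 1) A ->
  exists p N (v : nat -> A), [/\ prime p, p %| n & eval v (tcheck n p N) <> mv_zero A].
Proof.
move=> n0 An nBool.
have [q hq] := not_all_ex_not _ _ nBool.
have [qBool nqA] := imply_to_and _ _ hq.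
have [v nqv] := not_all_ex_not _ _ nqA.
pose checks := [seq (tcheck n p (qvars q), TZero) | p <- primes n].
have valid : sat (LV n) (q.1 ++ checks, q.2).
  move=> w hprem; apply: (holds_of_boolean n0 (qBool _ erefl)) => [|e he].
  - apply: boolean_of_checks => p pp pn.
    rewrite /evalN (hprem (tcheck n p (qvars q), TZero)) //.
    apply/List.in_or_app; right; apply: List.in_map; apply/In_mem.
    by rewrite mem_primes pp n0.
  - by apply: hprem; apply/List.in_or_app; left.
apply: NNPP => none; apply: nqv => hprem.
apply: (sat_of_Qgen An valid (v := v)) => e he.
case: (List.in_app_or _ _ _ he) => [/hprem // | /List.in_map_iff [p [<- /In_mem]]].
rewrite mem_primes => /and3P [pp _ pn].
by apply: NNPP => hp; apply: none; exists p, (qvars q), v.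
Qed.

Lemma quasivariety_LVp_LV1 n (Q : mvClass) (A : mvAlg) :
  0 < n -> is_quasivariety Q -> Q A -> Q (LV 1) -> QV (LV n) A -> ~ QV (LV 1) A ->
  exists2 p, prime p & p %| n /\ Q (prodA (LV p) (LV 1)).
Proof.
move=> n0 hQ QA Q1 An nBool.
have [p [N [v [pp pn c0]]]] := exists_nonzero_check n0 An nBool.
exists p => //; split => //.
apply: (Qgen_min hQ (quasivariety_prodA hQ QA Q1)).
exact: LVp_LV1_embeds n0 pp pn An c0.
Qed.

Lemma LV1_in_LVp_LV1 p : 0 < p -> QV (prodA (LV p) (LV 1)) (LV 1).
Proof.
move=> p0; pose f (x : LV 1) : prodA (LV p) (LV 1) := (scale p x, x).
apply: (@quasivariety_embed _ _ _ f (Qgen_quasivariety _) (@Qgen_self _)) => [|x y [] //].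
exact: hom_pair (scale_hom (ltn0Sn 0) (dvd1n p)) (@hom_id _).
Qed.

Lemma LVp_LV1_not_Boolean p : 1 < p -> ~ QV (LV 1) (prodA (LV p) (LV 1)).
Proof.
move=> p1 hBool.
have idem : sat (LV 1) ([::], (TOplus (TVar 0) (TVar 0), TVar 0)).
  move=> w _; apply: ord_inj; rewrite /= inordK; case: (w 0) => [[|[|]]] //=.
have := sat_of_Qgen hBool idem (v := fun _ => gen p) (fun _ (h : List.In _ [::]) => match h with end).
move/(congr1 (fun x : prodA (LV p) (LV 1) => nat_of_ord (x.1 : 'I_p.+1))).
by rewrite /= !inordK //; lia.
Qed.

Lemma LVp_LV1_in_LVn p n : 0 < p -> p %| n -> 0 < n -> QV (LV n) (prodA (LV p) (LV 1)).
Proof.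
move=> p0 pn n0.
pose f (x : prodA (LV p) (LV 1)) : prodA (LV n) (LV n) := (scale n x.1, scale n x.2).
have Qnn : QV (LV n) (prodA (LV n) (LV n)).
  exact: quasivariety_prodA (Qgen_quasivariety _) (@Qgen_self _) (@Qgen_self _).
apply: (@quasivariety_embed _ _ _ f (Qgen_quasivariety _) Qnn).
  apply: hom_pair.
  - exact: hom_comp (@hom_fst _ _) (scale_hom p0 pn).
  - exact: hom_comp (@hom_snd _ _) (scale_hom (ltn0Sn 0) (dvd1n n)).
move=> [a b] [a' b'] [/(scale_inj p0 pn n0) -> /(scale_inj (ltn0Sn 0) (dvd1n n) n0) ->].
by [].
Qed.

Lemma Boolean_strict_LVp_LV1 p : 1 < p -> strict_subclass (QV (LV 1)) (QV (prodA (LV p) (LV 1))).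
Proof.
move=> p1; split; last by move=> /(_ _ (@Qgen_self _)); apply: LVp_LV1_not_Boolean.
by apply: Qgen_min (Qgen_quasivariety _) (LV1_in_LVp_LV1 _); lia.
Qed.

Definition minimal_above_Boolean k (Q : mvClass) :=
  is_quasivariety Q /\ strict_subclass (QV (LV 1)) Q /\ subclass Q (QV (LV k)) /\
  (forall Q' : mvClass, is_quasivariety Q' -> strict_subclass (QV (LV 1)) Q' ->
     subclass Q' (QV (LV k)) -> subclass Q' Q -> subclass Q Q').

Lemma minimal_above_Boolean_sameclass k (Q Q0 : mvClass) :
  minimal_above_Boolean k Q0 -> sameclass Q Q0 -> minimal_above_Boolean k Q.
Proof.
case=> hQ0 [[BQ0 nQ0B] [Q0k min0]] same; have [QQ0 Q0Q] := same.
split; first exact: quasivariety_sameclass hQ0 same.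
split; first by split=> [A /BQ0 /Q0Q // | QB]; apply/nQ0B => A /Q0Q /QB.
split=> [A /QQ0 /Q0k // | Q' hQ' BQ' Q'k Q'Q A /QQ0].
by apply: min0 => // B /Q'Q /QQ0.
Qed.

Lemma Qgen_LVp_LV1_minimal k p : 0 < k -> prime p -> p %| k ->
  minimal_above_Boolean k (QV (prodA (LV p) (LV 1))).
Proof.
move=> k0 pp pk; have p0 := prime_gt0 pp.
split; first exact: Qgen_quasivariety.
split; first exact: Boolean_strict_LVp_LV1 (prime_gt1 pp).
split; first exact: Qgen_min (Qgen_quasivariety _) (LVp_LV1_in_LVn p0 pk k0).
move=> Q' hQ' [BQ' nQ'B] _ Q'P.
have [A hA] := not_all_ex_not _ _ nQ'B; have [Q'A nBool] := imply_to_and _ _ hA.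
have Ap : QV (LV p) A.
  exact: Qgen_min (Qgen_quasivariety _) (LVp_LV1_in_LVn p0 (dvdnn p) p0) _ (Q'P _ Q'A).
have [r pr [rp Q'r]] := quasivariety_LVp_LV1 p0 hQ' Q'A (BQ' _ (@Qgen_self _)) Ap nBool.
have <- : r = p by apply/eqP; rewrite -dvdn_prime2.
exact: Qgen_min hQ' Q'r.
Qed.

Lemma minimal_above_Boolean_is_Qgen k (Q : mvClass) : 0 < k -> minimal_above_Boolean k Q ->
  exists p, prime p /\ p %| k /\ sameclass Q (QV (prodA (LV p) (LV 1))).
Proof.
move=> k0 [hQ [[BQ nQB] [Qk minQ]]].
have [A hA] := not_all_ex_not _ _ nQB; have [QA nBool] := imply_to_and _ _ hA.
have [p pp [pk Qp]] := quasivariety_LVp_LV1 k0 hQ QA (BQ _ (@Qgen_self _)) (Qk _ QA) nBool.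
have PQ := Qgen_min hQ Qp.
exists p; split=> //; split=> //; split=> //.
apply: minQ PQ.
- exact: Qgen_quasivariety.
- exact: Boolean_strict_LVp_LV1 (prime_gt1 pp).
- exact: Qgen_min (Qgen_quasivariety _) (LVp_LV1_in_LVn (prime_gt0 pp) pk k0).
Qed.

Unset Implicit Arguments.
Theorem theorem5p5 (k : nat) (hk : 1 < k) (Q : mvClass) :
  ( is_quasivariety Q /\
    strict_subclass (Qgen (single (LV 1))) Q /\
    subclass Q (Qgen (single (LV k))) /\
    (forall Q' : mvClass,
       is_quasivariety Q' ->
       strict_subclass (Qgen (single (LV 1))) Q' ->
       subclass Q' (Qgen (single (LV k))) ->
       subclass Q' Q -> subclass Q Q') )
  <->
  (exists q : nat, prime q /\ q %| k /\
     sameclass Q (Qgen (single (prodA (LV q) (LV 1))))).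
Proof.
have k0 : 0 < k by lia.
split=> [|[q [pq [qk same]]]]; first exact: minimal_above_Boolean_is_Qgen.
exact: minimal_above_Boolean_sameclass (Qgen_LVp_LV1_minimal k0 pq qk) same.
Qed.
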